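(* Let $b>0$, let $x_0$ be as in the context and $\bar x:=\frac{a+\rho c}{\rho+b}$. Then $\bar x<x_0$.
   Context: Constants: $a\in\mathbb{R}$, $b>0$, $\sigma>0$, $\rho>0$, $c>0$. $\psi(x)=e^{\frac{(bx-a)^2}{2\sigma^2 b}}D_{-\rho/b}\big(-\frac{bx-a}{\sigma b}\sqrt{2b}\big)$ with $D_\beta(x)=\frac{e^{-x^2/4}}{\Gamma(-\beta)}\int_0^\infty t^{-\beta-1}e^{-t^2/2-xt}dt$ ($\beta<0$); $\psi$ is the positive, strictly increasing, strictly convex fundamental solution of $\frac12\sigma^2u''+(a-bx)u'-\rho u=0$. $x_0$ is the unique solution on $(c,\infty)$ of $(x-c)\psi'(x)-\psi(x)=0$. *)

From Stdlib Require Import Reals.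
From Coquelicot Require Import Coquelicot.
Open Scope R_scope.

Definition Gamma_fun (s : R) : R :=
  RInt_gen (fun t => Rpower t (s - 1) * exp (- t))
           (at_right 0) (Rbar_locally p_infty).

(* Parabolic cylinder function, integral representation valid for beta < 0:
   D_beta(x) = e^{-x^2/4}/Gamma(-beta) * int_0^oo t^{-beta-1} e^{-t^2/2 - x t} dt. *)
Definition Dpc (beta x : R) : R :=
  exp (- x ^ 2 / 4) / Gamma_fun (- beta) *
  RInt_gen (fun t => Rpower t (- beta - 1) * exp (- t ^ 2 / 2 - x * t))
           (at_right 0) (Rbar_locally p_infty).

Definition psi (a b sigma rho : R) (x : R) : R :=
  exp ((b * x - a) ^ 2 / (2 * sigma ^ 2 * b)) *
  Dpc (- rho / b) (- (b * x - a) / (sigma * b) * sqrt (2 * b)).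

Definition x0_eq (a b sigma rho c x : R) : Prop :=
  (x - c) * Derive (psi a b sigma rho) x - psi a b sigma rho x = 0.

From Stdlib Require Import Reals Lra.
From Coquelicot Require Import Coquelicot.
Open Scope R_scope.

(* Let J p z be the integral of t^p exp (- t^2/2 - z t) over (0, +oo). The integral
   representation of D_beta gives psi x = J (rho/b - 1) (z x) / Gamma (rho/b) with
   z x = - (b x - a) sqrt (2 b) / (sigma b), and differentiating under the integral sign
   psi' x = (sqrt (2 b) / sigma) J (rho/b) (z x) / Gamma (rho/b).  Integration by parts gives
   p J (p - 1) z = z J p z + J (p + 1) z.  For p = rho/b the equation defining x0 reads
   J (p - 1) z0 = k J p z0 with k = (x0 - c) sqrt (2 b) / sigma, hence
   J (p + 1) z0 = (p k - z0) J p z0.  All J being positive, p k - z0 > 0, and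
   p k - z0 = sqrt (2 b) / (sigma b) * ((rho + b) x0 - (a + rho c)). *)

Definition is_interval (D : R -> Prop) :=
  forall x y z, D x -> D y -> x <= z <= y -> D z.

Lemma is_interval_segment D x y z :
  is_interval D -> D x -> D y -> Rmin x y <= z <= Rmax x y -> D z.
Proof.
  intros HD Hx Hy Hz.
  destruct (Rle_dec x y) as [Hxy|Hxy].
  - rewrite Rmin_left, Rmax_right in Hz by lra. exact (HD x y z Hx Hy Hz).
  - rewrite Rmin_right, Rmax_left in Hz by lra. exact (HD y x z Hy Hx Hz).
Qed.

Lemma filter_prod_segment (Fa Fb : (R -> Prop) -> Prop) (D P : R -> Prop) :
  is_interval D -> Fa D -> Fb D -> (forall x, D x -> P x) ->
  filter_prod Fa Fb
    (fun ab => forall x, Rmin (fst ab) (snd ab) <= x <= Rmax (fst ab) (snd ab) -> P x).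
Proof.
  intros HD Ha Hb HP. exists D D; auto.
  intros a b Da Db x Hx. apply HP, (is_interval_segment D a b); auto.
Qed.

Lemma ex_RInt_interval (f : R -> R) D a b :
  is_interval D -> (forall x, D x -> continuous f x) -> D a -> D b -> ex_RInt f a b.
Proof.
  intros HD Hf Ha Hb. apply (ex_RInt_continuous (V := R_CompleteNormedModule)).
  intros z Hz. apply Hf, (is_interval_segment D a b); auto.
Qed.

Lemma RInt_Chasles_R (f : R -> R) a b c :
  ex_RInt f a b -> ex_RInt f b c -> RInt f a b + RInt f b c = RInt f a c.
Proof. exact (RInt_Chasles f a b c). Qed.

Section Domination.

Variables (f g : R -> R) (D : R -> Prop).
Hypothesis D_interval : is_interval D.
Hypothesis f_cont : forall x, D x -> continuous f x.
Hypothesis g_cont : forall x, D x -> continuous g x.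
Hypothesis f_le_g : forall x, D x -> Rabs (f x) <= g x.

Lemma RInt_abs_le a b : D a -> D b -> Rabs (RInt f a b) <= Rabs (RInt g a b).
Proof.
  assert (Hle : forall a b, a <= b -> D a -> D b -> Rabs (RInt f a b) <= Rabs (RInt g a b)).
  { intros x y Hxy Hx Hy. apply Rle_trans with (2 := Rle_abs _).
    apply (norm_RInt_le f g x y); auto.
    - intros z Hz. apply f_le_g, (D_interval x y z); auto.
    - apply (RInt_correct (V := R_CompleteNormedModule)), (ex_RInt_interval _ D); auto.
    - apply (RInt_correct (V := R_CompleteNormedModule)), (ex_RInt_interval _ D); auto. }
  intros Ha Hb. destruct (Rle_dec a b) as [Hab|Hab]; [now apply Hle|].
  rewrite <- (opp_RInt_swap f), <- (opp_RInt_swap g)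
    by (apply (ex_RInt_interval _ D); auto).
  unfold opp; simpl. rewrite !Rabs_Ropp. apply Hle; auto; lra.
Qed.

Lemma RInt_diff_abs_le a a' b b' : D a -> D a' -> D b -> D b' ->
  Rabs (RInt f a' b' - RInt f a b)
    <= Rabs (RInt g a' b - RInt g a b) + Rabs (RInt g a b' - RInt g a b).
Proof.
  intros Ha Ha' Hb Hb'.
  assert (Hfi : forall x y, D x -> D y -> ex_RInt f x y)
    by (intros; apply (ex_RInt_interval _ D); auto).
  assert (Hgi : forall x y, D x -> D y -> ex_RInt g x y)
    by (intros; apply (ex_RInt_interval _ D); auto).
  assert (Ef : @eq R (RInt f a' b') (RInt f a' a + RInt f a b + RInt f b b')).
  { rewrite Rplus_assoc. now rewrite (RInt_Chasles_R f a b b'), (RInt_Chasles_R f a' a b'); auto. }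
  assert (Ega : @eq R (RInt g a' b) (RInt g a' a + RInt g a b))
    by (symmetry; apply RInt_Chasles_R; auto).
  assert (Egb : @eq R (RInt g a b') (RInt g a b + RInt g b b'))
    by (symmetry; apply RInt_Chasles_R; auto).
  assert (Hr : forall u v w x y z : R, Rabs u <= Rabs x -> Rabs w <= Rabs z ->
            Rabs (u + v + w - v) <= Rabs (x + y - y) + Rabs (y + z - y)).
  { intros u v w x y z Hux Hwz.
    replace (u + v + w - v) with (u + w) by ring.
    replace (x + y - y) with x by ring. replace (y + z - y) with z by ring.
    eapply Rle_trans; [apply Rabs_triang | lra]. }
  rewrite Ef, Ega, Egb. apply Hr; apply RInt_abs_le; auto.
Qed.

Lemma ex_RInt_gen_dominated (Fa Fb : (R -> Prop) -> Prop)
  {PFa : ProperFilter Fa} {PFb : ProperFilter Fb} lg :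
  Fa D -> Fb D -> is_RInt_gen g Fa Fb lg -> ex_RInt_gen f Fa Fb.
Proof.
  intros HDa HDb Hg.
  assert (Hfun : filter_prod Fa Fb (fun ab =>
    (exists y : R, is_RInt f (fst ab) (snd ab) y) /\
    forall y1 y2 : R, is_RInt f (fst ab) (snd ab) y1 -> is_RInt f (fst ab) (snd ab) y2 -> y1 = y2)).
  { exists D D; auto. intros a b Ha Hb; split.
    - exists (RInt f a b).
      apply (RInt_correct (V := R_CompleteNormedModule)), (ex_RInt_interval _ D); auto.
    - intros y1 y2 H1 H2.
      now rewrite <- (is_RInt_unique _ _ _ _ H1), <- (is_RInt_unique _ _ _ _ H2). }
  apply (proj1 (filterlimi_locally_cauchy (fun ab y => is_RInt f (fst ab) (snd ab) y) Hfun)).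
  intros eps.
  assert (He : 0 < eps / 4) by (destruct eps; simpl; lra).
  destruct (proj1 (filterlimi_locally _ lg) Hg (mkposreal _ He)) as [Qa Qb HQa HQb HQ].
  assert (Hnear : forall a b, Qa a -> Qb b -> Rabs (RInt g a b - lg) < eps / 4).
  { intros a b Ha Hb. destruct (HQ a b Ha Hb) as [y [Hy Hball]]; simpl in Hy.
    rewrite (is_RInt_unique _ _ _ _ Hy). exact Hball. }
  exists (fun ab => (Qa (fst ab) /\ D (fst ab)) /\ (Qb (snd ab) /\ D (snd ab))). split.
  { exists (fun a => Qa a /\ D a) (fun b => Qb b /\ D b); try apply filter_and; auto. }
  intros [a b] [a' b'] [[Qa1 Da] [Qb1 Db]] [[Qa' Da'] [Qb' Db']] y y' Hy Hy'; simpl in *.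
  rewrite <- (is_RInt_unique _ _ _ _ Hy), <- (is_RInt_unique _ _ _ _ Hy').
  change (Rabs (RInt f a' b' - RInt f a b) < eps).
  apply Rle_lt_trans with (1 := RInt_diff_abs_le a a' b b' Da Da' Db Db').
  pose proof (Hnear a b Qa1 Qb1) as N1. pose proof (Hnear a' b Qa' Qb1) as N2.
  pose proof (Hnear a b' Qa1 Qb') as N3.
  apply Rabs_def2 in N1, N2, N3.
  assert (Rabs (RInt g a' b - RInt g a b) < eps / 2) by (apply Rabs_def1; lra).
  assert (Rabs (RInt g a b' - RInt g a b) < eps / 2) by (apply Rabs_def1; lra).
  lra.
Qed.

End Domination.

Lemma is_RInt_gen_antiderivative (Fa Fb : (R -> Prop) -> Prop) {FFa : Filter Fa} {FFb : Filter Fb}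
  (D : R -> Prop) (G g : R -> R) la lb :
  open D -> is_interval D -> Fa D -> Fb D ->
  (forall x, D x -> is_derive G x (g x)) -> (forall x, D x -> continuous g x) ->
  filterlim G Fa (locally la) -> filterlim G Fb (locally lb) ->
  is_RInt_gen g Fa Fb (lb - la).
Proof.
  intros HDo HDi Ha Hb HG Hg Hla Hlb.
  assert (HDG : forall x, D x -> Derive G x = g x) by (intros; apply is_derive_unique; auto).
  apply is_RInt_gen_ext with (Derive G).
  { generalize (filter_prod_segment Fa Fb D _ HDi Ha Hb HDG). apply filter_imp.
    intros ab H x Hx. apply H; lra. }
  apply is_RInt_gen_Derive; auto.
  - apply (filter_prod_segment Fa Fb D); auto. intros x Hx. exists (g x); auto.
  - apply (filter_prod_segment Fa Fb D); auto. intros x Hx.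
    apply continuous_ext_loc with g; auto.
    apply (filter_imp D); [intros y Hy; symmetry; auto | exact (HDo x Hx)].
Qed.

Lemma filterlim_at_point (G : R -> R) x : filterlim G (at_point x) (locally (G x)).
Proof. intros P HP. exact (locally_singleton _ _ HP). Qed.

Lemma filterlim_scal_0 {T} (F : (T -> Prop) -> Prop) {FF : Filter F} (h : T -> R) k :
  filterlim h F (locally 0) -> filterlim (fun t => k * h t) F (locally 0).
Proof.
  intros H. rewrite <- (Rmult_0_r k).
  exact (filterlim_comp _ _ _ h (fun y => k * y) _ _ _ H (filterlim_scal_r k 0)).
Qed.

Lemma filterlim_Rpower_at_right_0 q :
  0 < q -> filterlim (fun t => Rpower t q) (at_right 0) (locally 0).
Proof.
  intros Hq. unfold Rpower.
  apply (filterlim_comp _ _ _ ln (fun y => exp (q * y)) _ _ _ is_lim_ln_0).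
  apply (filterlim_comp _ _ _ (fun y => q * y) exp _ (Rbar_locally m_infty)); [|exact is_lim_exp_m].
  intros P [M HM]. exists (M / q). intros y Hy. apply HM.
  apply Rmult_lt_compat_l with (r := q) in Hy; auto.
  replace (q * (M / q)) with M in Hy by (field; lra). lra.
Qed.

Lemma filterlim_exp_sub_p_infty c :
  filterlim (fun t => exp (c - t)) (Rbar_locally p_infty) (locally 0).
Proof.
  apply (filterlim_comp _ _ _ (fun t => c - t) exp _ (Rbar_locally m_infty)); [|exact is_lim_exp_m].
  intros P [M HM]. exists (c - M). intros t Ht. apply HM. lra.
Qed.

Lemma is_interval_pos : is_interval (fun t => 0 < t).
Proof. intros x y z Hx _ Hz. lra. Qed.

Lemma at_right_0_lt e : 0 < e -> at_right 0 (fun t => 0 < t < e).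
Proof.
  intros He. exists (mkposreal e He). intros t Ht Ht0.
  change (Rabs (t - 0) < e) in Ht. rewrite Rminus_0_r, Rabs_right in Ht by lra. lra.
Qed.

Lemma is_RInt_gen_gt_0 (f : R -> R) l :
  (forall t, 0 < t -> 0 < f t) -> (forall t, 0 < t -> continuous f t) ->
  is_RInt_gen f (at_right 0) (Rbar_locally p_infty) l -> 0 < l.
Proof.
  intros Hpos Hcont Hl.
  assert (Hint : forall a b, 0 < a -> 0 < b -> ex_RInt f a b)
    by (intros; apply (ex_RInt_interval f _ a b is_interval_pos); auto).
  set (m := RInt f 1 2).
  assert (Hm : 0 < m) by (apply RInt_gt_0; [lra | intros; apply Hpos | intros; apply Hcont]; lra).
  assert (Hm2 : 0 < m / 2) by lra.
  assert (Hab : filter_prod (at_right 0) (Rbar_locally p_infty)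
                 (fun ab => 0 < fst ab < 1 /\ 2 < snd ab)).
  { exists (fun a => 0 < a < 1) (fun b => 2 < b); auto using at_right_0_lt, Rlt_0_1.
    now exists 2. }
  destruct (filter_ex _ (filter_and _ _ (proj1 (filterlimi_locally _ l) Hl (mkposreal _ Hm2)) Hab))
    as [[a b] [[y [Hy Hball]] [Ha Hb]]].
  simpl in *. change (Rabs (y - l) < m / 2) in Hball.
  rewrite <- (is_RInt_unique _ _ _ _ Hy) in Hball.
  assert (E : RInt f a 1 + m + RInt f 2 b = RInt f a b)
    by (unfold m; rewrite !RInt_Chasles_R; auto; apply Hint; lra).
  assert (0 <= RInt f a 1)
    by (apply RInt_ge_0; [lra | apply Hint | intros; apply Rlt_le, Hpos]; lra).
  assert (0 <= RInt f 2 b)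
    by (apply RInt_ge_0; [lra | apply Hint | intros; apply Rlt_le, Hpos]; lra).
  apply Rabs_def2 in Hball. lra.
Qed.

Lemma exp_le_compat x y : x <= y -> exp x <= exp y.
Proof. intros [H | ->]; [left; now apply exp_increasing | apply Rle_refl]. Qed.

(* Written so that the integrand of [Dpc beta x] is literally [tilted_gauss (- beta - 1) x]. *)
Definition tilted_gauss (p z t : R) : R := Rpower t p * exp (- t ^ 2 / 2 - z * t).

Definition tilted_moment (p z : R) : R :=
  RInt_gen (tilted_gauss p z) (at_right 0) (Rbar_locally p_infty).

Lemma tilted_gauss_gt0 p z t : 0 < tilted_gauss p z t.
Proof. apply Rmult_lt_0_compat; apply exp_pos. Qed.

Lemma continuous_tilted_gauss p z t : 0 < t -> continuous (tilted_gauss p z) t.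
Proof.
  intros Ht. apply (ex_derive_continuous (V := R_NormedModule)).
  unfold tilted_gauss, Rpower. auto_derive. lra.
Qed.

Lemma tilted_gauss_le_near_0 p z t :
  0 < t <= 1 -> tilted_gauss p z t <= exp (Rabs z) * Rpower t p.
Proof.
  intros Ht. unfold tilted_gauss. rewrite Rmult_comm.
  apply Rmult_le_compat_r; [apply Rlt_le, exp_pos|].
  apply exp_le_compat.
  pose proof (Rle_abs (- z)). pose proof (Rabs_pos z). rewrite Rabs_Ropp in *. nra.
Qed.

Lemma tilted_gauss_le_near_infty p z t :
  1 <= t -> tilted_gauss p z t <= exp ((Rabs p + Rabs z + 1) ^ 2 / 2 - t).
Proof.
  intros Ht. unfold tilted_gauss, Rpower. rewrite <- exp_plus. apply exp_le_compat.
  assert (Hln0 : 0 <= ln t) by (rewrite <- ln_1; apply ln_le; lra).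
  assert (Hln1 : ln t <= t) by (pose proof (exp_ineq1_le (ln t)); rewrite exp_ln in *; lra).
  assert (p * ln t <= Rabs p * t) by (pose proof (Rle_abs p); pose proof (Rabs_pos p); nra).
  assert (- z * t <= Rabs z * t) by (pose proof (Rle_abs (- z)); rewrite Rabs_Ropp in *; nra).
  pose proof (pow2_ge_0 (Rabs p + Rabs z + 1 - t)). nra.
Qed.

Lemma is_RInt_gen_Rpower_0_1 p :
  -1 < p -> is_RInt_gen (fun t => Rpower t p) (at_right 0) (at_point 1) (/ (p + 1)).
Proof.
  intros Hp.
  replace (/ (p + 1)) with (/ (p + 1) * Rpower 1 (p + 1) - 0)
    by (unfold Rpower; rewrite ln_1, Rmult_0_r, exp_0; ring).
  apply (is_RInt_gen_antiderivative _ _ (fun t => 0 < t) (fun t => / (p + 1) * Rpower t (p + 1))).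
  - apply open_gt.
  - apply is_interval_pos.
  - apply (filter_imp (fun t => 0 < t < 1)); [intros; lra | apply at_right_0_lt, Rlt_0_1].
  - cbv; lra.
  - intros x Hx.
    replace (Rpower x p) with (/ (p + 1) * ((p + 1) * Rpower x (p + 1 - 1)))
      by (replace (p + 1 - 1) with p by ring; field; lra).
    apply is_derive_scal, is_derive_Reals, derivable_pt_lim_power, Hx.
  - intros x Hx. apply (ex_derive_continuous (V := R_NormedModule)).
    unfold Rpower. auto_derive. lra.
  - apply (filterlim_scal_0 (at_right 0)), filterlim_Rpower_at_right_0. lra.
  - exact (filterlim_at_point _ 1).
Qed.

Lemma is_RInt_gen_exp_sub c :
  is_RInt_gen (fun t => exp (c - t)) (at_point 1) (Rbar_locally p_infty) (exp (c - 1)).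
Proof.
  replace (exp (c - 1)) with (0 - -1 * exp (c - 1)) by ring.
  apply (is_RInt_gen_antiderivative _ _ (fun _ => True) (fun t => -1 * exp (c - t))).
  - apply open_true.
  - easy.
  - easy.
  - now exists 0.
  - intros x _. auto_derive; [easy | unfold Rminus; ring].
  - intros x _. apply (ex_derive_continuous (V := R_NormedModule)). auto_derive. easy.
  - exact (filterlim_at_point _ 1).
  - apply (filterlim_scal_0 (Rbar_locally p_infty)), filterlim_exp_sub_p_infty.
Qed.

Lemma ex_RInt_gen_tilted_gauss p z :
  -1 < p -> ex_RInt_gen (tilted_gauss p z) (at_right 0) (Rbar_locally p_infty).
Proof.
  intros Hp. apply ex_RInt_gen_Chasles with 1.
  - refine (ex_RInt_gen_dominated _ (fun t => exp (Rabs z) * Rpower t p) (fun t => 0 < t <= 1)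
      _ _ _ _ _ _ _ _ _ (is_RInt_gen_scal _ _ _ (is_RInt_gen_Rpower_0_1 p Hp))).
    + intros x y w Hx Hy Hw. lra.
    + intros; apply continuous_tilted_gauss; lra.
    + intros x Hx. apply (ex_derive_continuous (V := R_NormedModule)).
      unfold Rpower. auto_derive. lra.
    + intros t Ht. rewrite Rabs_pos_eq by apply Rlt_le, tilted_gauss_gt0.
      now apply tilted_gauss_le_near_0.
    + apply (filter_imp (fun t => 0 < t < 1)); [intros; lra | apply at_right_0_lt, Rlt_0_1].
    + cbv; lra.
  - refine (ex_RInt_gen_dominated _ _ (fun t => 1 <= t) _ _ _ _ _ _ _ _ _ (is_RInt_gen_exp_sub _)).
    + intros x y w Hx Hy Hw. lra.
    + intros; apply continuous_tilted_gauss; lra.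
    + intros x Hx. apply (ex_derive_continuous (V := R_NormedModule)). auto_derive. easy.
    + intros t Ht. rewrite Rabs_pos_eq by apply Rlt_le, tilted_gauss_gt0.
      now apply tilted_gauss_le_near_infty.
    + cbv; lra.
    + exists 1. intros; lra.
Qed.

Lemma is_RInt_gen_tilted_moment p z : -1 < p ->
  is_RInt_gen (tilted_gauss p z) (at_right 0) (Rbar_locally p_infty) (tilted_moment p z).
Proof.
  intros Hp. apply (RInt_gen_correct (V := R_CompleteNormedModule)), ex_RInt_gen_tilted_gauss, Hp.
Qed.

Lemma tilted_moment_gt0 p z : -1 < p -> 0 < tilted_moment p z.
Proof.
  intros Hp. apply (is_RInt_gen_gt_0 (tilted_gauss p z)).
  - intros; apply tilted_gauss_gt0.
  - apply continuous_tilted_gauss.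
  - now apply is_RInt_gen_tilted_moment.
Qed.

Lemma is_derive_tilted_gauss p z t : 0 < t ->
  is_derive (tilted_gauss p z) t
    (p * tilted_gauss (p - 1) z t - z * tilted_gauss p z t - tilted_gauss (p + 1) z t).
Proof.
  intros Ht.
  assert (Hpow : is_derive (fun s => Rpower s p) t (p * Rpower t (p - 1)))
    by (apply is_derive_Reals, derivable_pt_lim_power, Ht).
  assert (Hexp : is_derive (fun s => exp (- s ^ 2 / 2 - z * s)) t
                   ((- t - z) * exp (- t ^ 2 / 2 - z * t)))
    by (auto_derive; [easy | f_equal; field]).
  replace (p * tilted_gauss (p - 1) z t - z * tilted_gauss p z t - tilted_gauss (p + 1) z t)
    with (p * Rpower t (p - 1) * exp (- t ^ 2 / 2 - z * t)
          + Rpower t p * ((- t - z) * exp (- t ^ 2 / 2 - z * t))).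
  - exact (is_derive_mult _ _ t _ _ Hpow Hexp Rmult_comm).
  - unfold tilted_gauss. rewrite Rpower_plus, Rpower_1 by exact Ht. ring.
Qed.

Lemma filterlim_tilted_gauss_at_right_0 p z :
  0 < p -> filterlim (tilted_gauss p z) (at_right 0) (locally 0).
Proof.
  intros Hp. apply (filterlim_le_le (fun _ => 0) _ (fun t => exp (Rabs z) * Rpower t p) 0).
  - apply (filter_imp (fun t => 0 < t < 1)); [|apply at_right_0_lt, Rlt_0_1].
    intros t Ht. split; [apply Rlt_le, tilted_gauss_gt0 | apply tilted_gauss_le_near_0; lra].
  - exact (filterlim_const 0).
  - apply (filterlim_scal_0 (at_right 0)), filterlim_Rpower_at_right_0, Hp.
Qed.

Lemma filterlim_tilted_gauss_p_infty p z :
  filterlim (tilted_gauss p z) (Rbar_locally p_infty) (locally 0).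
Proof.
  apply (filterlim_le_le (fun _ => 0) _ (fun t => exp ((Rabs p + Rabs z + 1) ^ 2 / 2 - t)) 0).
  - exists 1. intros t Ht.
    split; [apply Rlt_le, tilted_gauss_gt0 | apply tilted_gauss_le_near_infty; lra].
  - exact (filterlim_const 0).
  - apply filterlim_exp_sub_p_infty.
Qed.

Lemma tilted_moment_rec p z : 0 < p ->
  p * tilted_moment (p - 1) z = z * tilted_moment p z + tilted_moment (p + 1) z.
Proof.
  intros Hp.
  set (h := fun t =>
    p * tilted_gauss (p - 1) z t - z * tilted_gauss p z t - tilted_gauss (p + 1) z t).
  assert (Hlin : is_RInt_gen h (at_right 0) (Rbar_locally p_infty)
    (p * tilted_moment (p - 1) z - z * tilted_moment p z - tilted_moment (p + 1) z)).
  { pose proof (is_RInt_gen_tilted_moment (p - 1) z ltac:(lra)) as I1.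
    pose proof (is_RInt_gen_tilted_moment p z ltac:(lra)) as I2.
    pose proof (is_RInt_gen_tilted_moment (p + 1) z ltac:(lra)) as I3.
    exact (is_RInt_gen_minus _ _ _ _
      (is_RInt_gen_minus _ _ _ _ (is_RInt_gen_scal _ p _ I1) (is_RInt_gen_scal _ z _ I2)) I3). }
  assert (Hftc : is_RInt_gen h (at_right 0) (Rbar_locally p_infty) (0 - 0)).
  { apply (is_RInt_gen_antiderivative _ _ (fun t => 0 < t) (tilted_gauss p z)).
    - apply open_gt.
    - apply is_interval_pos.
    - now exists (mkposreal 1 Rlt_0_1).
    - now exists 0.
    - apply is_derive_tilted_gauss.
    - intros t Ht. apply (ex_derive_continuous (V := R_NormedModule)).
      unfold h, tilted_gauss, Rpower. auto_derive. lra.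
    - now apply filterlim_tilted_gauss_at_right_0.
    - apply filterlim_tilted_gauss_p_infty. }
  pose proof (is_RInt_gen_unique (V := R_CompleteNormedModule) _ _ Hlin) as E1.
  pose proof (is_RInt_gen_unique (V := R_CompleteNormedModule) _ _ Hftc) as E2.
  rewrite E1 in E2. lra.
Qed.

Lemma is_derive_of_remainder_le (F : R -> R) x l M :
  (forall h, Rabs h <= 1 -> Rabs (F (x + h) - F x - h * l) <= h ^ 2 * M) ->
  is_derive F x l.
Proof.
  intros Hrem. apply is_derive_Reals. intros eps Heps.
  assert (HM : 0 < eps / (Rabs M + 1)) by (apply Rdiv_lt_0_compat; pose proof (Rabs_pos M); lra).
  exists (mkposreal _ (Rmin_glb_lt _ _ _ Rlt_0_1 HM)). intros h Hh0 Hh; simpl in Hh.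
  pose proof (Rmin_l 1 (eps / (Rabs M + 1))). pose proof (Rmin_r 1 (eps / (Rabs M + 1))).
  assert (Hha : 0 < Rabs h) by (apply Rabs_pos_lt, Hh0).
  replace ((F (x + h) - F x) / h - l) with ((F (x + h) - F x - h * l) / h) by (field; exact Hh0).
  unfold Rdiv. rewrite Rabs_mult, Rabs_inv.
  apply Rle_lt_trans with (h ^ 2 * M * / Rabs h).
  { apply Rmult_le_compat_r; [apply Rlt_le, Rinv_0_lt_compat, Hha | apply Hrem; lra]. }
  replace (h ^ 2 * M * / Rabs h) with (M * Rabs h)
    by (rewrite <- (pow2_abs h); field; lra).
  apply Rle_lt_trans with (Rabs M * Rabs h); [pose proof (Rle_abs M); nra|].
  apply Rle_lt_trans with (Rabs M * (eps / (Rabs M + 1))); [pose proof (Rabs_pos M); nra|].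
  apply Rmult_lt_reg_r with (Rabs M + 1); [pose proof (Rabs_pos M); lra|].
  replace (Rabs M * (eps / (Rabs M + 1)) * (Rabs M + 1)) with (Rabs M * eps)
    by (field; pose proof (Rabs_pos M); lra).
  lra.
Qed.

Lemma Rabs_exp_sub_1_sub_le y : Rabs (exp y - 1 - y) <= y ^ 2 * exp (Rabs y).
Proof.
  pose proof (exp_ineq1_le y) as Hy. pose proof (exp_ineq1_le (- y)) as Hny.
  assert (Hinv : exp y * exp (- y) = 1) by (rewrite <- exp_plus, Rplus_opp_r; apply exp_0).
  pose proof (exp_pos y). pose proof (exp_pos (- y)).
  rewrite Rabs_pos_eq by lra.
  destruct (Rle_or_lt 0 y) as [Hpos|Hneg].
  - rewrite Rabs_pos_eq by lra.
    assert (exp y - 1 <= y * exp y) by nra.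
    nra.
  - rewrite Rabs_left by lra.
    assert ((exp y - 1 - y) * (1 - y) <= y ^ 2) by nra.
    assert (y ^ 2 <= y ^ 2 * exp (- y)) by nra.
    nra.
Qed.

Lemma tilted_gauss_taylor_le p z h t : 0 < t -> Rabs h <= 1 ->
  Rabs (tilted_gauss p (z + h) t - tilted_gauss p z t + h * tilted_gauss (p + 1) z t)
    <= h ^ 2 * tilted_gauss (p + 2) (z - 1) t.
Proof.
  intros Ht Hh. unfold tilted_gauss.
  set (A := Rpower t p). set (E := exp (- t ^ 2 / 2 - z * t)).
  assert (HA : 0 < A) by apply exp_pos. assert (HE : 0 < E) by apply exp_pos.
  assert (E1 : exp (- t ^ 2 / 2 - (z + h) * t) = E * exp (- h * t))
    by (unfold E; rewrite <- exp_plus; f_equal; ring).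
  assert (E2 : exp (- t ^ 2 / 2 - (z - 1) * t) = E * exp t)
    by (unfold E; rewrite <- exp_plus; f_equal; ring).
  assert (P1 : Rpower t (p + 1) = A * t) by (unfold A; rewrite Rpower_plus, Rpower_1; lra).
  assert (P2 : Rpower t (p + 2) = A * t ^ 2).
  { replace (p + 2) with (p + 1 + 1) by ring. rewrite Rpower_plus, P1, Rpower_1; [ring | lra]. }
  rewrite E1, E2, P1, P2. fold E.
  replace (A * (E * exp (- h * t)) - A * E + h * (A * t * E))
    with (A * E * (exp (- h * t) - 1 - - h * t)) by ring.
  rewrite Rabs_mult, (Rabs_pos_eq (A * E)) by nra.
  replace (h ^ 2 * (A * t ^ 2 * (E * exp t))) with (A * E * ((- h * t) ^ 2 * exp t)) by ring.
  apply Rmult_le_compat_l; [nra|].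
  eapply Rle_trans; [apply Rabs_exp_sub_1_sub_le|].
  apply Rmult_le_compat_l; [apply pow2_ge_0|]. apply exp_le_compat.
  rewrite Rabs_mult, Rabs_Ropp, (Rabs_pos_eq t) by lra. nra.
Qed.

Lemma tilted_moment_taylor_le p z h : -1 < p -> Rabs h <= 1 ->
  Rabs (tilted_moment p (z + h) - tilted_moment p z - h * - tilted_moment (p + 1) z)
    <= h ^ 2 * tilted_moment (p + 2) (z - 1).
Proof.
  intros Hp Hh.
  pose proof (is_RInt_gen_tilted_moment p (z + h) Hp) as I1.
  pose proof (is_RInt_gen_tilted_moment p z Hp) as I2.
  pose proof (is_RInt_gen_tilted_moment (p + 1) z ltac:(lra)) as I3.
  pose proof (is_RInt_gen_tilted_moment (p + 2) (z - 1) ltac:(lra)) as I4.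
  replace (tilted_moment p (z + h) - tilted_moment p z - h * - tilted_moment (p + 1) z)
    with (tilted_moment p (z + h) - tilted_moment p z + h * tilted_moment (p + 1) z) by ring.
  assert (Hnear : filter_prod (at_right 0) (Rbar_locally p_infty)
                   (fun ab => 0 < fst ab < 1 /\ 1 < snd ab)).
  { exists (fun a => 0 < a < 1) (fun b => 1 < b);
      [apply at_right_0_lt, Rlt_0_1 | now exists 1 | easy]. }
  refine (RInt_gen_norm (V := R_CompleteNormedModule)
    (Fa := at_right 0) (Fb := Rbar_locally p_infty) _ _ _ _ _ _
    (is_RInt_gen_plus _ _ _ _ (is_RInt_gen_minus _ _ _ _ I1 I2) (is_RInt_gen_scal _ h _ I3))
    (is_RInt_gen_scal _ (h ^ 2) _ I4)).
  - revert Hnear. apply filter_imp. intros [a b] Hab; simpl in *. lra.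
  - revert Hnear. apply filter_imp. intros [a b] Hab x Hx; simpl in *.
    apply tilted_gauss_taylor_le; lra.
Qed.

Lemma is_derive_tilted_moment p z : -1 < p ->
  is_derive (tilted_moment p) z (- tilted_moment (p + 1) z).
Proof.
  intros Hp. apply (is_derive_of_remainder_le _ _ _ (tilted_moment (p + 2) (z - 1))).
  intros h Hh. now apply tilted_moment_taylor_le.
Qed.

Lemma tilted_moment_ratio_gt0 p z r : 0 < p ->
  tilted_moment (p - 1) z = r * tilted_moment p z -> 0 < p * r - z.
Proof.
  intros Hp Hr. pose proof (tilted_moment_rec p z Hp) as Hrec. rewrite Hr in Hrec.
  pose proof (tilted_moment_gt0 p z ltac:(lra)).
  pose proof (tilted_moment_gt0 (p + 1) z ltac:(lra)).
  nra.
Qed.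

Lemma psi_tilted_moment a b sigma rho x : 0 < b -> 0 < sigma ->
  psi a b sigma rho x =
  / Gamma_fun (rho / b) * tilted_moment (rho / b - 1) (- (b * x - a) / (sigma * b) * sqrt (2 * b)).
Proof.
  intros Hb Hs. unfold psi, Dpc.
  replace (- (- rho / b)) with (rho / b) by (field; lra).
  set (z := - (b * x - a) / (sigma * b) * sqrt (2 * b)).
  change (RInt_gen _ (at_right 0) (Rbar_locally p_infty)) with (tilted_moment (rho / b - 1) z).
  assert (Hz : z ^ 2 / 4 = (b * x - a) ^ 2 / (2 * sigma ^ 2 * b)).
  { unfold z. replace ((- (b * x - a) / (sigma * b) * sqrt (2 * b)) ^ 2)
      with ((b * x - a) ^ 2 / (sigma * b) ^ 2 * sqrt (2 * b) ^ 2) by (field; lra).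
    rewrite pow2_sqrt by lra. field. lra. }
  replace (- z ^ 2 / 4) with (- ((b * x - a) ^ 2 / (2 * sigma ^ 2 * b))) by lra.
  rewrite exp_Ropp. unfold Rdiv.
  rewrite <- !Rmult_assoc, Rinv_r by apply Rgt_not_eq, exp_pos. ring.
Qed.

Lemma is_derive_psi a b sigma rho x : 0 < b -> 0 < sigma -> 0 < rho ->
  is_derive (psi a b sigma rho) x
    (/ Gamma_fun (rho / b) * (sqrt (2 * b) / sigma
       * tilted_moment (rho / b) (- (b * x - a) / (sigma * b) * sqrt (2 * b)))).
Proof.
  intros Hb Hs Hr.
  set (z := fun y => - (b * y - a) / (sigma * b) * sqrt (2 * b)).
  change (- (b * x - a) / (sigma * b) * sqrt (2 * b)) with (z x).
  apply is_derive_ext with (fun y => / Gamma_fun (rho / b) * tilted_moment (rho / b - 1) (z y)).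
  { intros y. symmetry. now apply psi_tilted_moment. }
  apply is_derive_scal.
  assert (Hz : is_derive z x (- (sqrt (2 * b) / sigma)))
    by (unfold z; auto_derive; [easy | field; lra]).
  assert (HJ : is_derive (tilted_moment (rho / b - 1)) (z x) (- tilted_moment (rho / b) (z x))).
  { replace (rho / b) with (rho / b - 1 + 1) at 2 by ring.
    apply is_derive_tilted_moment. pose proof (Rdiv_lt_0_compat _ _ Hr Hb). lra. }
  replace (sqrt (2 * b) / sigma * tilted_moment (rho / b) (z x))
    with (- (sqrt (2 * b) / sigma) * - tilted_moment (rho / b) (z x)) by ring.
  exact (is_derive_comp _ _ x _ _ HJ Hz).
Qed.

Theorem lemmaB1 (a b sigma rho c x0 : R) :
  0 < b -> 0 < sigma -> 0 < rho -> 0 < c ->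
  c < x0 -> x0_eq a b sigma rho c x0 ->
  (forall x, c < x -> x0_eq a b sigma rho c x -> x = x0) ->
  (a + rho * c) / (rho + b) < x0.
Proof.
  intros Hb Hs Hr _ Hx0 Heq Huniq.
  set (C := / Gamma_fun (rho / b)).
  set (z := fun x => - (b * x - a) / (sigma * b) * sqrt (2 * b)).
  set (k := sqrt (2 * b) / sigma).
  assert (Hpsi : forall x, psi a b sigma rho x = C * tilted_moment (rho / b - 1) (z x))
    by (intros; now apply psi_tilted_moment).
  assert (HD : forall x, Derive (psi a b sigma rho) x = C * (k * tilted_moment (rho / b) (z x)))
    by (intros; now apply is_derive_unique, is_derive_psi).
  (* [Gamma_fun] is not known to be nonzero; if [C] were 0, every x would solve [x0_eq]. *)
  assert (HC : C <> 0).
  { intros HC0. enough (x0 + 1 = x0) by lra.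
    apply Huniq; [lra |]. unfold x0_eq. rewrite HD, Hpsi, HC0. ring. }
  unfold x0_eq in Heq. rewrite HD, Hpsi in Heq.
  assert (Hratio : tilted_moment (rho / b - 1) (z x0)
                   = (x0 - c) * k * tilted_moment (rho / b) (z x0)).
  { apply (Rmult_eq_reg_l C); [lra | exact HC]. }
  pose proof (tilted_moment_ratio_gt0 _ _ _ (Rdiv_lt_0_compat _ _ Hr Hb) Hratio) as Hpos.
  assert (Hfactor : rho / b * ((x0 - c) * k) - z x0
                    = sqrt (2 * b) / (sigma * b) * ((rho + b) * x0 - (a + rho * c)))
    by (unfold k, z; field; lra).
  assert (0 < sqrt (2 * b) / (sigma * b))
    by (apply Rdiv_lt_0_compat; [apply sqrt_lt_R0 | apply Rmult_lt_0_compat]; lra).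
  assert (0 < (rho + b) * x0 - (a + rho * c)) by nra.
  apply Rmult_lt_reg_r with (rho + b); [lra |].
  unfold Rdiv. rewrite Rmult_assoc, Rinv_l, Rmult_1_r by lra. lra.
Qed.
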